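(* For every Keedwell Sudoku board $B$ and every $g\in G_k$, the board $g\cdot B$ is Keedwell and has the same linearity degree as $B$.
   Context: A Sudoku board is a $9\times 9$ array with entries from $\{0,\dots,8\}$ such that every row, column and each of the nine $3\times 3$ blocks (subsquares) contains each symbol once; the subsquare in block-row $i$ and block-column $j$ ($i,j\in\{0,1,2\}$) is the $(i,j)$th subsquare. The full Sudoku symmetry group is $G_9=H_9\times S_9$, where $H_9$ is the group of cell rearrangements generated by permutations of the three bands (horizontal strips of blocks), permutations of the rows within a band, permutations of the three pillars (vertical strips of blocks), permutations of the columns within a pillar, and the transpose, and $S_9$ is the group of all relabelings (permutations of the symbols applied to every entry). For a $3\times 3$ array, let $\alpha$ cycle its rows down by one and $\beta$ cycle its columns right by one; both have order $3$. A Sudoku board $B$ with upper-left subsquare $K$ is Keedwell if there are exponents $c_{ij},d_{ij}\in\mathbb{Z}/3\mathbb{Z}$ ($i,j\in\{0,1,2\}$) with $c_{00}=d_{00}=0$ such that the $(i,j)$th subsquare of $B$ is $\alpha^{c_{ij}}\beta^{d_{ij}}K$; since $K$ has nine distinct entries, these exponent matrices $\{c_{ij}\}$, $\{d_{ij}\}$ are uniquely determined by $B$. A matrix $\{m_{ij}\}_{i,j\in\{0,1,2\}}$ over $\mathbb{Z}/3\mathbb{Z}$ is quasi-linear if $m_{ij}=m_{i0}+m_{0j}$ for all $i,j$. The linearity degree of a Keedwell board is the number (0, 1 or 2) of its two exponent matrices $\{c_{ij}\}$, $\{d_{ij}\}$ that are quasi-linear. $G_k$ is the set of all $g\in G_9$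 that map the set of Keedwell boards to itself. *)

From mathcomp Require Import all_boot all_order all_algebra all_fingroup.
Set Implicit Arguments. Unset Strict Implicit. Unset Printing Implicit Defensive.
Import GRing.Theory.

(* A row (resp. column) index of the 9x9 grid is encoded as a pair
   (block index, offset inside the block) in 'I_3 * 'I_3: the pair (i, a)
   stands for row (resp. column) 3*i + a. *)
Definition Idx : finType := ('I_3 * 'I_3)%type.
Definition Cell : finType := (Idx * Idx)%type.

Definition board := {ffun Cell -> 'I_9}.

Definition rowb (r : Idx) : {set Cell} := [set x : Cell | x.1 == r].
Definition colb (c : Idx) : {set Cell} := [set x : Cell | x.2 == c].
Definition blockb (i j : 'I_3) : {set Cell} :=
  [set x : Cell | (x.1.1 == i) && (x.2.1 == j)].

Definition each_once (B : board) (A : {set Cell}) : bool :=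
  [forall s : 'I_9, #|[set x in A | B x == s]| == 1].

Definition sudoku (B : board) : bool :=
  [forall r, each_once B (rowb r)] && [forall c, each_once B (colb c)] &&
  [forall i, forall j, each_once B (blockb i j)].

Definition band_f (s : {perm 'I_3}) (x : Cell) : Cell :=
  ((s x.1.1, x.1.2), x.2).
Definition row_f (i0 : 'I_3) (s : {perm 'I_3}) (x : Cell) : Cell :=
  ((x.1.1, if x.1.1 == i0 then s x.1.2 else x.1.2), x.2).
Definition pillar_f (s : {perm 'I_3}) (x : Cell) : Cell :=
  (x.1, (s x.2.1, x.2.2)).
Definition col_f (j0 : 'I_3) (s : {perm 'I_3}) (x : Cell) : Cell :=
  (x.1, (x.2.1, if x.2.1 == j0 then s x.2.2 else x.2.2)).
Definition transp_f (x : Cell) : Cell := (x.2, x.1).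

Definition H9gens : {set {perm Cell}} :=
  [set p : {perm Cell} |
     [exists s : {perm 'I_3}, [forall x, p x == band_f s x]]
  || [exists i0 : 'I_3, exists s : {perm 'I_3}, [forall x, p x == row_f i0 s x]]
  || [exists s : {perm 'I_3}, [forall x, p x == pillar_f s x]]
  || [exists j0 : 'I_3, exists s : {perm 'I_3}, [forall x, p x == col_f j0 s x]]
  || [forall x, p x == transp_f x]].

Definition H9 : {set {perm Cell}} := <<H9gens>>%g.

(* G_9 = H_9 x S_9 : pairs (h, sigma) with h in H_9, sigma any relabeling.
   Action: (h, sigma) . B  =  the board x |-> sigma (B (h^-1 x)). *)
Definition G9elt := ({perm Cell} * {perm 'I_9})%type.
Definition inG9 (g : G9elt) : bool := g.1 \in H9.
Definition gact9 (g : G9elt) (B : board) : board :=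
  [ffun x => g.2 (B ((g.1)^-1%g x))].

(* exponent matrices indexed by (i, j) in 'I_3 * 'I_3, entries in Z/3Z
   ('I_3 = 'Z_3 with its Zp ring structure). The (i,j)-th subsquare is
   alpha^{c_ij} beta^{d_ij} K, i.e. its (a,b) entry is K (a - c_ij, b - d_ij). *)
Definition expmx := {ffun ('I_3 * 'I_3) -> 'I_3}.

Definition keedwell_with (B : board) (c d : expmx) : bool :=
  (c (0, 0)%R == 0%R) && (d (0, 0)%R == 0%R) &&
  [forall i : 'I_3, forall j : 'I_3, forall a : 'I_3, forall b : 'I_3,
     B ((i, a), (j, b)) ==
     B ((0%R, (a - c (i, j))%R), (0%R, (b - d (i, j))%R))].

Definition keedwell (B : board) : Prop :=
  sudoku B /\ exists c d : expmx, keedwell_with B c d.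

Definition quasi_linear (m : expmx) : bool :=
  [forall i : 'I_3, forall j : 'I_3, m (i, j) == (m (i, 0%R) + m (0%R, j))%R].

(* linearity degree: number of quasi-linear exponent matrices among the
   (unique) pair {c_ij}, {d_ij} of B; 0 by convention if B is not Keedwell *)
Definition linearity_degree (B : board) : nat :=
  match [pick cd : (expmx * expmx)%type | keedwell_with B cd.1 cd.2] with
  | Some cd => (quasi_linear cd.1 : nat) + (quasi_linear cd.2 : nat)
  | None => 0
  end.

Definition inGk (g : G9elt) : Prop :=
  inG9 g /\ forall B : board, keedwell B -> keedwell (gact9 g B).

(* The linearity degree can be read off the board without reference to K.
   Call the symbols of a row lying in one pillar a row segment, and say the
   rows are coherent when two rows with equal segments in one pillar have equal
   segments in every pillar; likewise for columns.  In a Keedwell board, row a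
   of band i meets pillar j in row a - c_ij of K, so the rows are coherent
   exactly when c is quasi-linear, and the columns exactly when d is.  Band,
   row, pillar and column permutations merely reindex rows, pillars and the
   cells of a segment, the transpose exchanges rows and columns, and a
   relabelling maps every segment by an injection; hence the number of
   coherent directions is invariant under G_9. *)

From mathcomp Require Import all_boot all_order all_algebra all_fingroup.
Set Implicit Arguments. Unset Strict Implicit. Unset Printing Implicit Defensive.
Import GRing.Theory.
Local Open Scope ring_scope.

Section Coherence.
Variables (I J : finType).

Definition coherent (T : eqType) (S : I -> J -> T) : bool :=
  [forall R, forall R', [exists j, S R j == S R' j] ==> [forall j, S R j == S R' j]].

Lemma coherent_comp (T : eqType) (S S' : I -> J -> T) (phi : I -> I) (pi : J -> J) :
  (forall R j, S' R j = S (phi R) (pi j)) -> coherent S -> coherent S'.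
Proof.
move=> E /forallP cohS; apply/forallP => R; apply/forallP => R'.
apply/implyP => /existsP[j0]; rewrite !E => Sj0.
have /forallP/(_ (phi R'))/implyP cohR := cohS (phi R).
have /forallP all_j : [forall j, S (phi R) j == S (phi R') j].
  by apply: cohR; apply/existsP; exists (pi j0).
by apply/forallP => j; rewrite !E.
Qed.

Lemma coherent_reindex (T : eqType) (S S' : I -> J -> T) (phi : I -> I) (pi : J -> J) :
  injective phi -> injective pi ->
  (forall R j, S' R j = S (phi R) (pi j)) -> coherent S' = coherent S.
Proof.
move=> /injF_bij[phi' phiK phiK'] /injF_bij[pi' piK piK'] E.
apply/idP/idP; last exact: coherent_comp E.
by apply: (coherent_comp (phi := phi') (pi := pi')) => R j; rewrite E phiK' piK'.
Qed.

Lemma coherent_inj (T T' : eqType) (f : T -> T') (S : I -> J -> T) (S' : I -> J -> T') :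
  injective f -> (forall R j, S' R j = f (S R j)) -> coherent S' = coherent S.
Proof.
move=> f_inj E; apply: eq_forallb => R; apply: eq_forallb => R'.
by congr (_ ==> _); [apply: eq_existsb | apply: eq_forallb] => j; rewrite !E inj_eq.
Qed.

End Coherence.

Lemma quasi_linear_coherent (I : finType) (V : finZmodType) (o : I) (m : I -> I -> V) :
  m o o = 0 ->
  [forall u, forall v, m u v == m u o + m o v] =
  coherent (fun (R : I * V) j => R.2 - m R.1 j).
Proof.
move=> m_oo; apply/idP/idP => [/forallP qlin | /forallP coh].
- have mE u v : m u v = m u o + m o v by exact/eqP/(forallP (qlin u)).
  have shift (R : I * V) j : R.2 - m R.1 j = (R.2 - m R.1 o) - m o j.
    by rewrite mE opprD addrA.
  apply/forallP => R; apply/forallP => R'; apply/implyP => /existsP[j0].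
  rewrite (shift R) (shift R') (inj_eq (subIr _)) => /eqP eqR.
  by apply/forallP => j; rewrite (shift R) (shift R') eqR.
- apply/forallP => u; apply/forallP => v.
  (* the rows (u, m u o) and (o, 0) agree at pillar o *)
  have /forallP/(_ (o, 0))/implyP := coh (u, m u o).
  have -> /= : [exists j, m u o - m u j == 0 - m o j].
    by apply/existsP; exists o; rewrite m_oo !subrr.
  move=> /(_ isT)/forallP/(_ v); rewrite sub0r subr_eq => /eqP ->.
  by rewrite addrAC addNr add0r.
Qed.

Lemma imset_injF (A T : finType) (F : A -> T) (h : A -> A) :
  injective h -> [set F (h a) | a : A] = [set F a | a : A].
Proof.
move=> /injF_bij[h' hK hK']; apply/setP => x.
apply/imsetP/imsetP => [[a _ ->] | [a _ ->]]; first by exists (h a).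
by exists (h' a); rewrite ?hK'.
Qed.

Lemma imset_slice_inj (A B T : finType) (K : A * B -> T) (b0 : B) :
  injective K -> injective (fun a => [set K (a, b) | b : B]).
Proof.
move=> K_inj a a' eq_slice.
have : K (a, b0) \in [set K (a', b) | b : B] by rewrite -eq_slice imset_f.
by case/imsetP=> b _ /K_inj[].
Qed.

Definition row_segment (B : board) (R : Idx) (j : 'I_3) : {set 'I_9} :=
  [set B (R, (j, b)) | b : 'I_3].
Definition col_segment (B : board) (C : Idx) (i : 'I_3) : {set 'I_9} :=
  [set B ((i, a), C) | a : 'I_3].

Definition coherence_degree (B : board) : nat :=
  (coherent (row_segment B) + coherent (col_segment B))%N.

Lemma sudoku_block_inj (B : board) (i j : 'I_3) :
  sudoku B -> injective (fun ab : 'I_3 * 'I_3 => B ((i, ab.1), (j, ab.2))).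
Proof.
move=> /andP[_ /forallP/(_ i)/forallP/(_ j) blockB] [a b] [a' b'] /= eqB.
have /forallP/(_ (B ((i, a), (j, b))))/cards1P[x Bx] := blockB.
have : ((i, a), (j, b)) \in [set x] by rewrite -Bx !inE /= !eqxx.
have : ((i, a'), (j, b')) \in [set x] by rewrite -Bx !inE /= eqB !eqxx.
by rewrite !inE => /eqP<- /eqP[-> ->].
Qed.

Section KeedwellBoard.
Variables (B : board) (c d : expmx).
Hypotheses (sudokuB : sudoku B) (keedwellB : keedwell_with B c d).

Let K (ab : 'I_3 * 'I_3) := B ((0, ab.1), (0, ab.2)).

Lemma keedwell_withE i a j b : B ((i, a), (j, b)) = K (a - c (i, j), b - d (i, j)).
Proof.
by case/andP: keedwellB => _ /forallP/(_ i)/forallP/(_ j)/forallP/(_ a)/forallP/(_ b)/eqP.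
Qed.

Lemma coherent_row_segment : coherent (row_segment B) = quasi_linear c.
Proof.
case/andP: keedwellB => /andP[/eqP c00 _] _.
rewrite /quasi_linear (quasi_linear_coherent (m := fun u v => c (u, v))) //.
have K_inj : injective K by apply: sudoku_block_inj.
apply: (coherent_inj (imset_slice_inj 0 K_inj)) => -[i a] j.
rewrite /row_segment -(imset_injF (fun b => K (a - c (i, j), b)) (subIr (d (i, j)))).
by apply: eq_imset => b; rewrite keedwell_withE.
Qed.

Lemma coherent_col_segment : coherent (col_segment B) = quasi_linear d.
Proof.
case/andP: keedwellB => /andP[_ /eqP d00] _.
have -> : quasi_linear d = [forall u, forall v, d (v, u) == d (0, u) + d (v, 0)].
  by apply/forallP/forallP => ql u; apply/forallP => v; rewrite addrC;
    apply: (forallP (ql v)).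
rewrite (quasi_linear_coherent (m := fun u v => d (v, u))) //.
have K'_inj : injective (fun ba : 'I_3 * 'I_3 => K (ba.2, ba.1)).
  by move=> [b a] [b' a'] /(sudoku_block_inj sudokuB) [-> ->].
apply: (coherent_inj (imset_slice_inj 0 K'_inj)) => -[j b] i.
rewrite /col_segment -(imset_injF (fun a => K (a, b - d (i, j))) (subIr (c (i, j)))).
by apply: eq_imset => a; rewrite keedwell_withE.
Qed.

End KeedwellBoard.

Lemma linearity_degreeE (B : board) : keedwell B -> linearity_degree B = coherence_degree B.
Proof.
move=> [sudokuB [c [d kwB]]]; rewrite /linearity_degree.
case: pickP => [[c' d'] /= kwB' | /(_ (c, d)) /=]; last by rewrite kwB.
by rewrite /coherence_degree (coherent_row_segment sudokuB kwB')
  (coherent_col_segment sudokuB kwB').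
Qed.

Definition board_comp (B : board) (f : Cell -> Cell) : board := [ffun x => B (f x)].

Lemma if_perm_inj (T : finType) (b : bool) (s : {perm T}) :
  injective (fun x => if b then s x else x).
Proof. by case: b => // x y /perm_inj. Qed.
Arguments if_perm_inj {T} b s.

Lemma coherence_degree_band B s : coherence_degree (board_comp B (band_f s)) = coherence_degree B.
Proof.
congr (nat_of_bool _ + nat_of_bool _).
- apply: (coherent_reindex (phi := fun R : Idx => (s R.1, R.2)) (pi := id)) => //.
  + by move=> [i a] [i' a'] [/perm_inj-> ->].
  + by move=> R j; apply: eq_imset => b; rewrite ffunE.
- apply: (coherent_reindex (phi := id) (pi := s)) => //; first exact: perm_inj.
  by move=> C i; apply: eq_imset => a; rewrite ffunE.
Qed.

Lemma coherence_degree_row B i0 s :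
  coherence_degree (board_comp B (row_f i0 s)) = coherence_degree B.
Proof.
congr (nat_of_bool _ + nat_of_bool _).
- apply: (coherent_reindex (phi := fun R : Idx => (R.1, if R.1 == i0 then s R.2 else R.2))
    (pi := id)) => //.
  + by move=> [i a] [i' a'] [<-] /(if_perm_inj _ s)->.
  + by move=> R j; apply: eq_imset => b; rewrite ffunE.
- apply: (coherent_reindex (phi := id) (pi := id)) => // C i.
  rewrite /col_segment -(imset_injF (fun a => B ((i, a), C)) (if_perm_inj (i == i0) s)).
  by apply: eq_imset => a; rewrite ffunE.
Qed.

Lemma coherence_degree_transp B : coherence_degree (board_comp B transp_f) = coherence_degree B.
Proof.
rewrite /coherence_degree addnC.
by congr (nat_of_bool _ + nat_of_bool _);
  apply: (coherent_reindex (phi := id) (pi := id)) => // R j;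
  apply: eq_imset => b; rewrite ffunE.
Qed.

Lemma board_comp_transp_conj B (f g : Cell -> Cell) :
  (forall x, g x = transp_f (f (transp_f x))) ->
  board_comp B g = board_comp (board_comp (board_comp B transp_f) f) transp_f.
Proof. by move=> gE; apply/ffunP => x; rewrite !ffunE gE. Qed.

Lemma coherence_degree_pillar B s :
  coherence_degree (board_comp B (pillar_f s)) = coherence_degree B.
Proof.
by rewrite (@board_comp_transp_conj _ (band_f s)) // coherence_degree_transp
  coherence_degree_band coherence_degree_transp.
Qed.

Lemma coherence_degree_col B j0 s :
  coherence_degree (board_comp B (col_f j0 s)) = coherence_degree B.
Proof.
by rewrite (@board_comp_transp_conj _ (row_f j0 s)) // coherence_degree_transp
  coherence_degree_row coherence_degree_transp.
Qed.

Definition degree_stabilizer : {set {perm Cell}} :=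
  [set p : {perm Cell} | [forall B, coherence_degree (board_comp B p) == coherence_degree B]].

Lemma degree_stabilizer_group_set : group_set degree_stabilizer.
Proof.
apply/group_setP; split.
  rewrite inE; apply/forallP => B; apply/eqP; congr coherence_degree.
  by apply/ffunP => x; rewrite ffunE perm1.
move=> p q; rewrite !inE => /forallP stab_p /forallP stab_q; apply/forallP => B.
have -> : board_comp B (p * q)%g = board_comp (board_comp B q) p.
  by apply/ffunP => x; rewrite !ffunE permM.
by rewrite (eqP (stab_p _)) (eqP (stab_q _)).
Qed.

Canonical degree_stabilizer_group := Group degree_stabilizer_group_set.

Lemma H9_sub_degree_stabilizer : H9 \subset degree_stabilizer.
Proof.
rewrite gen_subG; apply/subsetP => p; rewrite !inE => gen_p.
apply/forallP => B; apply/eqP.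
have compE f : (forall x, p x == f x) -> board_comp B p = board_comp B f.
  by move=> pf; apply/ffunP => x; rewrite !ffunE (eqP (pf x)).
case/orP: gen_p => [/orP[/orP[/orP[] | ] | ] | ].
- by case/existsP => s /forallP/compE->; apply: coherence_degree_band.
- by case/existsP => i0 /existsP[s /forallP/compE->]; apply: coherence_degree_row.
- by case/existsP => s /forallP/compE->; apply: coherence_degree_pillar.
- by case/existsP => j0 /existsP[s /forallP/compE->]; apply: coherence_degree_col.
- by move/forallP/compE->; apply: coherence_degree_transp.
Qed.

Lemma coherence_degree_relabel (s : {perm 'I_9}) (B : board) :
  coherence_degree [ffun x => s (B x)] = coherence_degree B.
Proof.
have s_inj := imset_inj (@perm_inj _ s).
congr (nat_of_bool _ + nat_of_bool _); apply: (coherent_inj s_inj) => R j;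
  by rewrite -imset_comp; apply: eq_imset => b; rewrite ffunE.
Qed.

Lemma coherence_degree_gact (g : G9elt) (B : board) :
  inG9 g -> coherence_degree (gact9 g B) = coherence_degree B.
Proof.
move=> H9g; have : (g.1^-1)%g \in degree_stabilizer.
  by apply: (subsetP H9_sub_degree_stabilizer); rewrite groupV.
rewrite inE => /forallP/(_ B)/eqP <-.
rewrite -[in RHS](coherence_degree_relabel g.2); congr coherence_degree.
by apply/ffunP => x; rewrite !ffunE.
Qed.

Theorem lemma3p6 (B : board) (g : G9elt) :
  keedwell B -> inGk g ->
  keedwell (gact9 g B) /\ linearity_degree (gact9 g B) = linearity_degree B.
Proof.
move=> keedwellB [H9g Gk_g]; have keedwell_gB := Gk_g B keedwellB.
by split; rewrite // !linearity_degreeE // coherence_degree_gact.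
Qed.
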